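(* Let $X$ be a complete CAT(0) space, $f:X\to(-\infty,\infty]$ a convex, proper, lower semicontinuous function, and $(\gamma_n)$ a sequence of positive reals. Then the family $(J_{\gamma_n})_{n\in\mathbb{N}}$ of resolvents of $f$ is jointly firmly nonexpansive with respect to $(\gamma_n)$.
   Context: A geodesic space $(X,d)$ is CAT(0) if for all $z\in X$, all geodesics $\gamma:[a,b]\to X$ and all $t\in[0,1]$, $d^2(z,\gamma((1-t)a+tb))\le(1-t)d^2(z,\gamma(a))+td^2(z,\gamma(b))-t(1-t)d^2(\gamma(a),\gamma(b))$; $(1-t)x+ty$ denotes the point at distance $t\,d(x,y)$ from $x$ on the unique geodesic from $x$ to $y$. For $\gamma>0$, the resolvent (proximal mapping) of $f$ of order $\gamma$ is $J_\gamma:X\to X$, $J_\gamma(x):=\arg\min_{y\in X}\left[f(y)+\frac1{2\gamma}d^2(x,y)\right]$ (the minimizer exists and is unique). $(T_n)$ is jointly firmly nonexpansive w.r.t. $(\gamma_n)$ if for all $n,m$, $x,y\in X$, $\alpha,\beta\in[0,1]$ with $(1-\alpha)\gamma_n=(1-\beta)\gamma_m$: $d(T_nx,T_my)\le d((1-\alpha)x+\alpha T_nx,(1-\beta)y+\beta T_my)$. *)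

From Stdlib Require Import ClassicalEpsilon.
From mathcomp Require Import all_boot all_order all_algebra.
From mathcomp Require Import reals ereal.
Set Implicit Arguments. Unset Strict Implicit. Unset Printing Implicit Defensive.
Import Order.TTheory GRing.Theory Num.Theory.
Local Open Scope ring_scope.

Section CAT0.
Variables (R : realType) (X : Type) (d : X -> X -> R).

Definition is_metric : Prop :=
  (forall x y, 0 <= d x y) /\ (forall x y, d x y = 0 <-> x = y) /\
  (forall x y, d x y = d y x) /\ (forall x y z, d x z <= d x y + d y z).

Definition complete_metric : Prop :=
  forall u : nat -> X,
    (forall eps, 0 < eps -> exists N, forall p q, (N <= p)%N -> (N <= q)%N ->
        d (u p) (u q) < eps) ->
    exists l, forall eps, 0 < eps -> exists N, forall p, (N <= p)%N -> d (u p) l < eps.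

Definition is_geodesic (g : R -> X) (a b : R) : Prop :=
  a <= b /\ forall s t, a <= s <= b -> a <= t <= b -> d (g s) (g t) = `|s - t|.

Definition geodesic_space : Prop :=
  forall x y, exists g : R -> X,
    is_geodesic g 0 (d x y) /\ g 0 = x /\ g (d x y) = y.

Definition CAT0_ineq : Prop :=
  forall (z : X) (g : R -> X) (a b : R), is_geodesic g a b ->
  forall t, 0 <= t <= 1 ->
    (d z (g ((1 - t) * a + t * b))) ^+ 2 <=
      (1 - t) * (d z (g a)) ^+ 2 + t * (d z (g b)) ^+ 2
      - t * (1 - t) * (d (g a) (g b)) ^+ 2.

Definition CAT0_space : Prop := is_metric /\ geodesic_space /\ CAT0_ineq.

(* (1-t)x + t y : the point at distance t d(x,y) from x on the (unique)
   geodesic from x to y, i.e. the point z with d x z = t d(x,y) and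
   d z y = (1-t) d(x,y) (unique in a CAT(0) space). *)
Definition geo_pt (x y : X) (t : R) : X :=
  epsilon (inhabits x)
    (fun z => d x z = t * d x y /\ d z y = (1 - t) * d x y).

Local Open Scope ereal_scope.

Definition no_minfty (f : X -> \bar R) : Prop := forall x, f x != -oo.

Definition proper_fun (f : X -> \bar R) : Prop :=
  no_minfty f /\ exists x, f x < +oo.

Definition convex_fun (f : X -> \bar R) : Prop :=
  forall x y (t : R), (0 <= t <= 1)%R ->
    f (geo_pt x y t) <= (1 - t)%:E * f x + t%:E * f y.

Definition lsc_fun (f : X -> \bar R) : Prop :=
  forall x (r : R), r%:E < f x ->
    exists eps : R, (0 < eps)%R /\ forall y, (d x y < eps)%R -> r%:E < f y.

(* resolvent J_gamma x := argmin_y [ f y + 1/(2 gamma) d(x,y)^2 ]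
   (the minimizer exists and is unique under the standing assumptions) *)
Definition resolvent (f : X -> \bar R) (gamma : R) (x : X) : X :=
  epsilon (inhabits x)
    (fun y => forall w, f y + ((2 * gamma)^-1 * (d x y) ^+ 2)%:E
                        <= f w + ((2 * gamma)^-1 * (d x w) ^+ 2)%:E).

Local Close Scope ereal_scope.

Definition jointly_firmly_nonexpansive (T : nat -> X -> X) (gam : nat -> R) : Prop :=
  forall (n m : nat) (x y : X) (alpha beta : R),
    0 <= alpha <= 1 -> 0 <= beta <= 1 ->
    (1 - alpha) * gam n = (1 - beta) * gam m ->
    d (T n x) (T m y) <= d (geo_pt x (T n x) alpha) (geo_pt y (T m y) beta).

End CAT0.

(* The resolvent J_mu u is the minimiser of F = f + d(u,.)^2 / (2 mu).  It exists
   because F is lower semicontinuous, bounded below (convexity and lower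
   semicontinuity give f an affine minorant in d(x0,.)) and, by the CAT(0)
   inequality at midpoints, strongly midpoint convex, so that minimising sequences
   are Cauchy.  Comparing J_mu u with the points of a geodesic [J_mu u, w] gives a
   variational inequality; adding two of them and using the CAT(0) quadrilateral
   inequality shows that J_mu is nonexpansive, and the same inequality yields the
   resolvent identity J_((1-a) l) ((1-a) u + a J_l u) = J_l u.  If
   (1-a) gam_n = (1-b) gam_m = mu, the two sides of joint firm nonexpansiveness are
   therefore d(J_mu u', J_mu v') and d(u', v') for the two convex combinations u', v'. *)

From Stdlib Require Import ClassicalEpsilon.
From mathcomp Require Import all_boot all_order all_algebra.
From mathcomp Require Import boolp classical_sets reals ereal.
From mathcomp Require Import ring lra.
Set Implicit Arguments. Unset Strict Implicit. Unset Printing Implicit Defensive.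
Import Order.TTheory GRing.Theory Num.Theory.
Local Open Scope ring_scope.

Lemma le_of_le_add_scale (R : realFieldType) (a b k : R) :
  0 <= k -> (forall t, 0 < t <= 1 -> a <= b + t * k) -> a <= b.
Proof.
move=> k0 le_ab; apply/ler_addgt0Pr => e e0.
have k1 : 0 < k + 1 by rewrite ltr_wpDl.
set t := Num.min 1 (e / (k + 1)).
have t0 : 0 < t by rewrite lt_min ltr01 divr_gt0.
apply: le_trans (le_ab t _) _; first by rewrite t0 ge_min lexx.
rewrite lerD2l; apply: le_trans (_ : e / (k + 1) * k <= e).
  by rewrite ler_wpM2r // ge_min lexx orbT.
by rewrite mulrAC ler_pdivrMr // ler_pM2l // lerDl.
Qed.

Lemma sqrrD_le_div (R : realFieldType) (u v t : R) :
  0 < t < 1 -> (u + v) ^+ 2 <= u ^+ 2 / t + v ^+ 2 / (1 - t).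
Proof.
case/andP=> t0 t1; have t1' : 0 < 1 - t by rewrite subr_gt0.
rewrite -subr_ge0.
have -> : u ^+ 2 / t + v ^+ 2 / (1 - t) - (u + v) ^+ 2
          = (u * (1 - t) - v * t) ^+ 2 / (t * (1 - t)).
  by field; rewrite !gt_eqF.
by rewrite divr_ge0 ?sqr_ge0 // mulr_ge0 // ltW.
Qed.

Lemma inv_succ_lt (R : archiRealFieldType) (eps : R) :
  0 < eps -> exists N, forall n, (N <= n)%N -> n.+1%:R^-1 < eps.
Proof.
move=> eps0; exists (Num.bound eps^-1) => n le_Nn.
have bound_lt : eps^-1 < (Num.bound eps^-1)%:R by rewrite archi_boundP // invr_ge0 ltW.
rewrite -[eps]invrK ltf_pV2 ?posrE ?invr_gt0 ?ltr0n //.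
by apply: lt_le_trans bound_lt _; rewrite ler_nat ltnW.
Qed.

Section Metric.
Variables (R : realType) (X : Type) (d : X -> X -> R).
Hypothesis d_metric : is_metric d.

Lemma dist_ge0 x y : 0 <= d x y. Proof. by case: d_metric. Qed.
Lemma dist_eq0 x y : d x y = 0 <-> x = y. Proof. by case: d_metric => _ []. Qed.
Lemma distC x y : d x y = d y x. Proof. by case: d_metric => _ [_ []]. Qed.
Lemma dist_triangle x y z : d x z <= d x y + d y z.
Proof. by case: d_metric => _ [_ []]. Qed.
Lemma dist_xx x : d x x = 0. Proof. exact/dist_eq0. Qed.

Lemma sqr_dist_lb u x y : d u x ^+ 2 - 2 * d x y * d u x <= d u y ^+ 2.
Proof.
have := dist_triangle u y x; rewrite (distC y x).
have := dist_ge0 u x; have := dist_ge0 u y; have := dist_ge0 x y.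
set a := d u x; set b := d u y; set r := d x y => r0 b0 a0 tri.
have [le_ar|lt_ra] := leP a r.
  have := ler_wpM2l a0 le_ar; have := mulr_ge0 a0 r0; have := sqr_ge0 b; nra.
have : (a - r) ^+ 2 <= b ^+ 2.
  rewrite ler_pXn2r //; first by lra.
  by rewrite nnegrE subr_ge0 ltW.
nra.
Qed.

Lemma lsc_sqr_dist u c : 0 <= c -> lsc_fun d (fun y => (c * d u y ^+ 2)%:E).
Proof.
move=> c0 x r; rewrite lte_fin => lt_r.
have a0 := dist_ge0 u x; set a := d u x in lt_r a0 *.
have den0 : 0 < 2 * c * a + 1 by rewrite ltr_wpDl ?mulr_ge0.
exists ((c * a ^+ 2 - r) / (2 * c * a + 1)); split.
  by rewrite divr_gt0 // subr_gt0.
move=> y; rewrite ltr_pdivlMr // lte_fin => lt_dxy.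
have := sqr_dist_lb u x y; rewrite -/a => lb.
have := ler_wpM2l c0 lb; have := dist_ge0 x y; have := mulr_ge0 c0 a0.
nra.
Qed.

Lemma lsc_funD (G : X -> \bar R) (g : X -> R) :
  lsc_fun d G -> lsc_fun d (fun y => (g y)%:E) -> lsc_fun d (fun y => (G y + (g y)%:E)%E).
Proof.
move=> G_lsc g_lsc x r lt_r.
have [s [lt_s lt_sG]] : exists s, s < g x /\ ((r - s)%:E < G x)%E.
  move: lt_r; case: (G x) => [v| |] //= lt_r; last first.
    by exists (g x - 1); split; [lra | exact: ltry].
  move: lt_r; rewrite lte_fin => lt_r.
  exists (g x - (v + g x - r) / 2); split; rewrite ?lte_fin; lra.
have [e1 [e10 near_G]] := G_lsc x _ lt_sG.
have [e2 [e20 near_g]] := g_lsc x s lt_s.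
exists (Num.min e1 e2); split; first by rewrite lt_min e10.
move=> y; rewrite lt_min => /andP[y1 y2].
by rewrite -[r](subrK s) EFinD lteD // ?near_G ?near_g.
Qed.

Definition dist_cvg (u : nat -> X) (l : X) : Prop :=
  forall eps, 0 < eps -> exists N, forall p, (N <= p)%N -> d (u p) l < eps.

Lemma lsc_le_cvg (G : X -> \bar R) (z : nat -> X) (l : X) (L : R) :
  lsc_fun d G -> dist_cvg z l ->
  (forall n, (G (z n) <= (L + n.+1%:R^-1)%:E)%E) -> (G l <= L%:E)%E.
Proof.
move=> G_lsc zl Gz; apply/lee_addgt0Pr => e e0.
rewrite -EFinD leNgt; apply/negP => /G_lsc[eps [eps0 near_l]].
have [N1 hN1] := zl eps eps0.
have [N2 hN2] := inv_succ_lt e0.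
set n := maxn N1 N2.
have := near_l (z n); rewrite distC hN1 ?leq_maxl // => /(_ isT) lt_Gz.
have := lt_le_trans lt_Gz (Gz n); rewrite lte_fin.
by rewrite ltrD2l => /(lt_trans (hN2 n (leq_maxr _ _))); rewrite ltxx.
Qed.

Lemma midconvex_lsc_has_min (G : X -> \bar R) (k : R) :
  complete_metric d -> lsc_fun d G -> 0 < k ->
  (exists M : R, forall y, (M%:E <= G y)%E) -> (exists x, (G x < +oo)%E) ->
  (forall p q (a b : R), (G p <= a%:E)%E -> (G q <= b%:E)%E ->
     exists m, (G m <= ((a + b) / 2 - k * d p q ^+ 2)%:E)%E) ->
  exists p, forall w, (G p <= G w)%E.
Proof.
move=> d_complete G_lsc k0 [M GM] [x0 Gx0] G_mid.
pose S := [set r : R | exists y, (G y <= r%:E)%E]%classic.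
have S_inf : has_inf S.
  split; last by exists M => r [y /(le_trans (GM y))]; rewrite lee_fin.
  have Gx0_fin : G x0 \is a fin_num.
    by rewrite fin_numElt Gx0 andbT (lt_le_trans _ (GM x0)) ?ltNyr.
  by exists (fine (G x0)), x0; rewrite fineK.
pose L := inf S.
have L_le : forall y, (L%:E <= G y)%E.
  move=> y; case Gy: (G y) => [r| |]; last 2 first.
  - exact: leey.
  - by have := GM y; rewrite Gy.
  by rewrite lee_fin; apply: (ge_inf S_inf.2); exists y; rewrite Gy.
have [z Gz] : {z : nat -> X & forall n, (G (z n) <= (L + n.+1%:R^-1)%:E)%E}.
  apply: (@choice _ _ (fun n y => (G y <= (L + n.+1%:R^-1)%:E)%E)) => n.
  have n_gt0 : 0 < n.+1%:R^-1 :> R by rewrite invr_gt0.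
  have [r [y Gy] lt_r] := inf_adherent n_gt0 S_inf.
  by exists y; apply: le_trans Gy _; rewrite lee_fin ltW.
have z_close p q : k * d (z p) (z q) ^+ 2 <= (p.+1%:R^-1 + q.+1%:R^-1) / 2.
  have [m Gm] := G_mid _ _ _ _ (Gz p) (Gz q).
  have := le_trans (L_le m) Gm; rewrite lee_fin.
  by move: (p.+1%:R^-1) (q.+1%:R^-1) => ep eq; lra.
have [l zl] : exists l, dist_cvg z l.
  apply: d_complete => eps eps0.
  have [N hN] := inv_succ_lt (mulr_gt0 k0 (exprn_gt0 2 eps0)).
  exists N => p q le_Np le_Nq.
  have : d (z p) (z q) ^+ 2 < eps ^+ 2.
    rewrite -(ltr_pM2l k0); apply: le_lt_trans (z_close p q) _.
    move: (hN p le_Np) (hN q le_Nq); move: (p.+1%:R^-1) (q.+1%:R^-1) => ep eq; lra.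
  by rewrite ltr_pXn2r // nnegrE ?dist_ge0 ?ltW.
by exists l => w; apply: le_trans (L_le w); apply: lsc_le_cvg zl Gz.
Qed.

End Metric.

Section CAT0.
Variables (R : realType) (X : Type) (d : X -> X -> R).
Hypotheses (d_metric : is_metric d) (d_geodesic : geodesic_space d)
  (d_cat0 : CAT0_ineq d).

Lemma cat0_ineq_pt x y t p z : 0 <= t <= 1 ->
  d x p = t * d x y -> d p y = (1 - t) * d x y ->
  d z p ^+ 2 <= (1 - t) * d z x ^+ 2 + t * d z y ^+ 2 - t * (1 - t) * d x y ^+ 2.
Proof.
move=> t01 dxp dpy.
have [g [g_geo [g0 gD]]] := d_geodesic x y.
have cat0_g w : d w (g (t * d x y)) ^+ 2 <=
    (1 - t) * d w x ^+ 2 + t * d w y ^+ 2 - t * (1 - t) * d x y ^+ 2.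
  by have := d_cat0 w g_geo t01; rewrite mulr0 add0r g0 gD.
suff -> : p = g (t * d x y) by apply: cat0_g.
apply/(dist_eq0 d_metric)/eqP; rewrite -sqrf_eq0 eq_le sqr_ge0 andbT.
(* the CAT(0) inequality at [z := p] reads [d p (g (t d x y)) ^ 2 <= 0] *)
have := cat0_g p; rewrite (distC d_metric p x) dxp dpy.
lra.
Qed.

Lemma geo_ptP x y t : 0 <= t <= 1 ->
  d x (geo_pt d x y t) = t * d x y /\ d (geo_pt d x y t) y = (1 - t) * d x y.
Proof.
move=> /andP[t0 t1].
apply: (epsilon_spec (inhabits x)
  (fun z => d x z = t * d x y /\ d z y = (1 - t) * d x y)).
have [g [[_ g_iso] [g0 gD]]] := d_geodesic x y.
have D0 := dist_ge0 d_metric x y.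
have tD0 : 0 <= t * d x y by rewrite mulr_ge0.
have tD1 : t * d x y <= d x y by rewrite ler_piMl.
exists (g (t * d x y)); split.
  have := g_iso 0 (t * d x y); rewrite g0 lexx D0 tD0 tD1 => /(_ isT isT) ->.
  by rewrite sub0r normrN ger0_norm.
have := g_iso (t * d x y) (d x y); rewrite gD lexx D0 tD0 tD1 => /(_ isT isT) ->.
by rewrite distrC ger0_norm ?subr_ge0 //; ring.
Qed.

Lemma cat0_geo_pt x y t z : 0 <= t <= 1 ->
  d z (geo_pt d x y t) ^+ 2 <=
    (1 - t) * d z x ^+ 2 + t * d z y ^+ 2 - t * (1 - t) * d x y ^+ 2.
Proof. by move=> t01; have [] := geo_ptP x y t01; apply: cat0_ineq_pt. Qed.

Lemma geo_pt1 x y : geo_pt d x y 1 = y.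
Proof.
have [_] := geo_ptP x y (t:=1) (ltac:(by rewrite ler01 lexx)).
by rewrite subrr mul0r => /dist_eq0; apply.
Qed.

Lemma quadrilateral_ineq a b c e :
  d a c ^+ 2 + d b e ^+ 2 - d a e ^+ 2 - d b c ^+ 2 <= 2 * d a b * d c e.
Proof.
have [/dist_eq0 -> //|A_neq0] := eqVneq (d a b) 0.
  by rewrite dist_xx // mulr0 mul0r; lra.
have [/dist_eq0 -> //|B_neq0] := eqVneq (d c e) 0.
  by rewrite dist_xx // mulr0; lra.
set A := d a b; set B := d c e.
have A0 : 0 < A by rewrite lt_neqAle eq_sym A_neq0 dist_ge0.
have B0 : 0 < B by rewrite lt_neqAle eq_sym B_neq0 dist_ge0.
(* split [a, c] at the point [m] with [d a m : d m c = A : B] *)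
set t := A / (A + B).
have t0 : 0 < t by rewrite divr_gt0 ?addr_gt0.
have t1 : t < 1 by rewrite ltr_pdivrMr ?addr_gt0 // mul1r ltrDl.
have t01 : 0 <= t <= 1 by rewrite !ltW.
have t1' : 0 < 1 - t by rewrite subr_gt0.
set m := geo_pt d a c t.
have bm := cat0_geo_pt a c b t01; have em := cat0_geo_pt a c e t01.
rewrite -/m (distC d_metric b a) -/A in bm.
rewrite -/m (distC d_metric e c) -/B (distC d_metric e a) (distC d_metric e m) in em.
have be : d b e ^+ 2 <= d b m ^+ 2 / t + d m e ^+ 2 / (1 - t).
  apply: le_trans (sqrrD_le_div _ _ (_ : 0 < t < 1)); last by rewrite t0 t1.
  by rewrite ler_pXn2r ?nnegrE ?addr_ge0 ?dist_ge0 // dist_triangle.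
have it0 : 0 <= t^-1 by rewrite invr_ge0 ltW.
have it1 : 0 <= (1 - t)^-1 by rewrite invr_ge0 ltW.
have := le_trans be (lerD (ler_wpM2r it0 bm) (ler_wpM2r it1 em)).
have -> : ((1 - t) * A ^+ 2 + t * d b c ^+ 2 - t * (1 - t) * d a c ^+ 2) / t +
    ((1 - t) * d a e ^+ 2 + t * B ^+ 2 - t * (1 - t) * d a c ^+ 2) / (1 - t) =
    2 * A * B + d b c ^+ 2 + d a e ^+ 2 - d a c ^+ 2.
  have -> : 1 - t = B / (A + B) by rewrite /t; field; rewrite gt_eqF ?addr_gt0.
  by rewrite /t; field; rewrite !gt_eqF ?addr_gt0.
lra.
Qed.

End CAT0.

Section Resolvent.
Variables (R : realType) (X : Type) (d : X -> X -> R) (f : X -> \bar R).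
Hypotheses (d_metric : is_metric d) (d_geodesic : geodesic_space d)
  (d_cat0 : CAT0_ineq d) (d_complete : complete_metric d).
Hypotheses (f_convex : convex_fun d f) (f_proper : proper_fun f) (f_lsc : lsc_fun d f).

Let f_nNy : no_minfty f := f_proper.1.

Lemma convex_fun_fin x y t (a b : R) : f x = a%:E -> f y = b%:E -> 0 <= t <= 1 ->
  (f (geo_pt d x y t) <= ((1 - t) * a + t * b)%:E)%E.
Proof. by move=> fx fy t01; have := f_convex x y t01; rewrite fx fy. Qed.

Lemma affine_minorant :
  exists x0 (a K : R), 0 <= K /\ forall y, ((a - K * d x0 y)%:E <= f y)%E.
Proof.
have [x0 fx0_lt] := f_proper.2.
have [a fx0] : exists a, f x0 = a%:E.
  by move: (f_nNy x0) fx0_lt; case: (f x0) => // a; exists a.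
have [eps [eps0 near_x0]] :
    exists eps, 0 < eps /\ forall y, d x0 y < eps -> ((a - 1)%:E < f y)%E.
  by apply: f_lsc; rewrite fx0 lte_fin; lra.
exists x0, (a - 1), (2 / eps); split; first by rewrite divr_ge0 // ltW.
move=> y; have [near|far] := ltP (d x0 y) eps.
  apply: le_trans (ltW (near_x0 y near)).
  by rewrite lee_fin gerBl mulr_ge0 ?(dist_ge0 d_metric) ?divr_ge0 ?ltW.
case fy: (f y) => [b| |]; [|exact: leey|by have := f_nNy y; rewrite fy].
(* convexity along [x0, y], evaluated at distance [eps / 2] from [x0] *)
set D := d x0 y in far *; have D0 : 0 < D by apply: lt_le_trans far.
set t := eps / (2 * D).
have t0 : 0 < t by rewrite divr_gt0 ?mulr_gt0.
have t01 : 0 <= t <= 1.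
  by rewrite ltW //= ler_pdivrMr ?mulr_gt0 // mul1r; lra.
have [dz _] := geo_ptP d_metric d_geodesic x0 y t01.
have := near_x0 (geo_pt d x0 y t); rewrite dz -/D.
have -> : t * D = eps / 2 by rewrite /t; field; rewrite gt_eqF.
move=> /(_ ltac:(lra)) /lt_le_trans /(_ (convex_fun_fin fx0 fy t01)).
rewrite lte_fin lee_fin => lt_conv.
have tK : t * (2 / eps * D) = 1 by rewrite /t; field; rewrite !gt_eqF.
have : t * (a - b) < t * (2 / eps * D) by rewrite tK; lra.
rewrite ltr_pM2l //; lra.
Qed.

Definition prox_obj (u : X) (mu : R) (y : X) : \bar R :=
  (f y + ((2 * mu)^-1 * d u y ^+ 2)%:E)%E.

Definition is_prox (u : X) (mu : R) (p : X) : Prop :=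
  forall w, (prox_obj u mu p <= prox_obj u mu w)%E.

Lemma prox_obj_le_fin u mu y (A : R) : (prox_obj u mu y <= A%:E)%E ->
  exists2 a, f y = a%:E & a + (2 * mu)^-1 * d u y ^+ 2 <= A.
Proof.
by rewrite /prox_obj; have := f_nNy y; case: (f y) => // a _ le_aA; exists a.
Qed.

Lemma prox_obj_lb u mu : 0 < mu -> exists M : R, forall y, (M%:E <= prox_obj u mu y)%E.
Proof.
move=> mu0; have [x0 [a [K [K0 f_ge]]]] := affine_minorant.
set c := (2 * mu)^-1; have c0 : 0 < c by rewrite invr_gt0 mulr_gt0.
exists (a - K * d x0 u - K ^+ 2 / (4 * c)) => y.
apply: le_trans (leeD2r _ (f_ge y)); rewrite -EFinD lee_fin -/c.
have := dist_triangle d_metric x0 u y; set s := d u y => tri.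
have Ks : K * d x0 y <= K * (d x0 u + s) by rewrite ler_wpM2l.
(* [c s^2 - K s] is bounded below by its minimum [- K^2 / (4 c)] *)
have : 0 <= (2 * c * s - K) ^+ 2 / (4 * c) by rewrite divr_ge0 ?sqr_ge0 ?mulr_ge0 ?ltW.
have -> : (2 * c * s - K) ^+ 2 / (4 * c) = c * s ^+ 2 - K * s + K ^+ 2 / (4 * c).
  by field; rewrite gt_eqF.
lra.
Qed.

Lemma prox_obj_midpoint u mu p q (A B : R) : 0 < mu ->
  (prox_obj u mu p <= A%:E)%E -> (prox_obj u mu q <= B%:E)%E ->
  exists m, (prox_obj u mu m <= ((A + B) / 2 - (8 * mu)^-1 * d p q ^+ 2)%:E)%E.
Proof.
move=> mu0 /prox_obj_le_fin[a fp pA] /prox_obj_le_fin[b fq qB].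
set c := (2 * mu)^-1; have c0 : 0 < c by rewrite invr_gt0 mulr_gt0.
have half : 0 <= (2^-1 : R) <= 1 by rewrite invr_ge0 ler0n invr_le1 ?ler1n ?unitfE.
exists (geo_pt d p q 2^-1).
apply: le_trans (leeD2r _ (convex_fun_fin fp fq half)) _; rewrite -EFinD lee_fin.
have := ler_wpM2l (ltW c0) (cat0_geo_pt d_metric d_geodesic d_cat0 p q u half).
have -> : (8 * mu)^-1 = c / 4 by rewrite /c; field; rewrite gt_eqF.
rewrite -/c in pA qB *; lra.
Qed.

Lemma exists_prox u mu : 0 < mu -> exists p, is_prox u mu p.
Proof.
move=> mu0; apply: (midconvex_lsc_has_min d_metric (k := (8 * mu)^-1)) => //.
- apply: (lsc_funD f_lsc); apply: lsc_sqr_dist => //.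
  by rewrite invr_ge0 mulr_ge0 // ltW.
- by rewrite invr_gt0 mulr_gt0.
- exact: prox_obj_lb.
- have [x0 fx0] := f_proper.2; exists x0; rewrite /prox_obj.
  by move: (f_nNy x0) fx0; case: (f x0) => // r _ _; rewrite -EFinD ltry.
- by move=> p q A B; apply: prox_obj_midpoint.
Qed.

Lemma resolvent_is_prox mu u : 0 < mu -> is_prox u mu (resolvent d f mu u).
Proof. by move=> /(exists_prox u); apply: epsilon_spec. Qed.

Lemma prox_fin u mu p : is_prox u mu p -> exists a, f p = a%:E.
Proof.
have [x0 fx0] := f_proper.2; move: (f_nNy x0) fx0.
case fx0: (f x0) => [a0| |] // _ _ /(_ x0).
rewrite {2}/prox_obj fx0 -EFinD => /prox_obj_le_fin[a fp _].
by exists a.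
Qed.

Lemma prox_variational_ineq u mu p w (a b : R) : 0 < mu -> is_prox u mu p ->
  f p = a%:E -> f w = b%:E ->
  a - b <= (2 * mu)^-1 * (d u w ^+ 2 - d u p ^+ 2 - d p w ^+ 2).
Proof.
move=> mu0 p_prox fp fw; set c := (2 * mu)^-1.
have c0 : 0 < c by rewrite invr_gt0 mulr_gt0.
apply: (@le_of_le_add_scale _ _ _ (c * d p w ^+ 2)).
  by rewrite mulr_ge0 ?sqr_ge0 ?ltW.
move=> t /andP[t0 t1]; have t01 : 0 <= t <= 1 by rewrite ltW.
(* minimality of [p] against the points of [p, w], letting t -> 0 *)
have := le_trans (p_prox _) (leeD2r _ (convex_fun_fin fp fw t01)).
rewrite /prox_obj fp -!EFinD lee_fin -/c => le_pm.
have le_cm := ler_wpM2l (ltW c0) (cat0_geo_pt d_metric d_geodesic d_cat0 p w u t01).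
have : t * (a - b) <=
    t * (c * (d u w ^+ 2 - d u p ^+ 2 - d p w ^+ 2) + t * (c * d p w ^+ 2)) by lra.
by rewrite ler_pM2l.
Qed.

Lemma prox_nonexpansive u v mu p q : 0 < mu ->
  is_prox u mu p -> is_prox v mu q -> d p q <= d u v.
Proof.
move=> mu0 p_prox q_prox.
have [a fp] := prox_fin p_prox; have [b fq] := prox_fin q_prox.
have vp := prox_variational_ineq mu0 p_prox fp fq.
have vq := prox_variational_ineq mu0 q_prox fq fp.
have quad := quadrilateral_ineq d_metric d_geodesic d_cat0 u v q p.
rewrite (distC d_metric q p) in vq quad.
have c0 : 0 < (2 * mu)^-1 by rewrite invr_gt0 mulr_gt0.
have : 0 <= (2 * mu)^-1 *
    (d u q ^+ 2 + d v p ^+ 2 - d u p ^+ 2 - d v q ^+ 2 - 2 * d p q ^+ 2) by lra.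
rewrite pmulr_rge0 // => comb.
have : d p q * d p q <= d u v * d p q by lra.
have := dist_ge0 d_metric p q; rewrite le_eqVlt => /orP[/eqP <- _|pq_gt0].
  exact: dist_ge0.
by rewrite ler_pM2r.
Qed.

Lemma prox_geo_pt x lam alpha p q : 0 < lam -> 0 <= alpha < 1 ->
  is_prox x lam p -> is_prox (geo_pt d x p alpha) ((1 - alpha) * lam) q -> q = p.
Proof.
move=> lam0 /andP[a0 a1] p_prox q_prox.
have a01 : 0 <= alpha <= 1 by rewrite a0 ltW.
have a1' : 0 < 1 - alpha by rewrite subr_gt0.
have [xu up] := geo_ptP d_metric d_geodesic x p a01.
set u := geo_pt d x p alpha in q_prox xu up.
have mu0 : 0 < (1 - alpha) * lam by rewrite mulr_gt0.
have [a fp] := prox_fin p_prox; have [b fq] := prox_fin q_prox.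
have vq := prox_variational_ineq mu0 q_prox fq fp.
have vp := prox_variational_ineq lam0 p_prox fp fq.
set D := d x p in xu up vp; set s := d u q in vq; set e := d q p in vq.
rewrite (distC d_metric p q) -/e in vp.
have comb : 0 <= (d u p ^+ 2 - s ^+ 2 - e ^+ 2) +
                  (1 - alpha) * (d x q ^+ 2 - D ^+ 2 - e ^+ 2).
  have : 0 <= 2 * ((1 - alpha) * lam) *
    ((2 * ((1 - alpha) * lam))^-1 * (d u p ^+ 2 - s ^+ 2 - e ^+ 2) +
     (2 * lam)^-1 * (d x q ^+ 2 - D ^+ 2 - e ^+ 2)).
    by apply: mulr_ge0; [rewrite mulr_ge0 ?ltW | lra].
  by congr (_ <= _); field; rewrite !gt_eqF.
have xq : d x q <= alpha * D + s by rewrite -xu; apply: dist_triangle.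
have xq2 : (1 - alpha) * d x q ^+ 2 <= (1 - alpha) * (alpha * D + s) ^+ 2.
  apply: ler_wpM2l; first exact: ltW.
  by rewrite ler_pXn2r ?nnegrE ?addr_ge0 ?mulr_ge0 ?(dist_ge0 d_metric).
(* [comb] then reads [0 <= - alpha ((1 - alpha) D - s)^2 - (2 - alpha) e^2] *)
rewrite up in comb; have sq := mulr_ge0 a0 (sqr_ge0 ((1 - alpha) * D - s)).
have e2 : (2 - alpha) * e ^+ 2 <= 0 by lra.
have : e ^+ 2 <= 0 by rewrite -(ler_pM2l (_ : 0 < 2 - alpha)) ?mulr0 //; lra.
move=> e_le0; apply/(dist_eq0 d_metric)/eqP.
by rewrite -sqrf_eq0 eq_le e_le0 sqr_ge0.
Qed.

Lemma resolvent_geo_pt lam alpha x : 0 < lam -> 0 <= alpha < 1 ->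
  resolvent d f ((1 - alpha) * lam) (geo_pt d x (resolvent d f lam x) alpha) =
  resolvent d f lam x.
Proof.
move=> lam0 a01; apply: (prox_geo_pt lam0 a01 (resolvent_is_prox x lam0)).
by apply: resolvent_is_prox; rewrite mulr_gt0 // subr_gt0; case/andP: a01.
Qed.

Lemma resolvent_nonexpansive mu u v : 0 < mu ->
  d (resolvent d f mu u) (resolvent d f mu v) <= d u v.
Proof.
by move=> mu0; apply: (prox_nonexpansive mu0); apply: resolvent_is_prox.
Qed.

End Resolvent.

Theorem proposition3p17 (R : realType) (X : Type) (d : X -> X -> R)
  (f : X -> \bar R) (gam : nat -> R) :
  CAT0_space d -> complete_metric d ->
  convex_fun d f -> proper_fun f -> lsc_fun d f ->
  (forall n, 0 < gam n) ->
  jointly_firmly_nonexpansive d (fun n => resolvent d f (gam n)) gam.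
Proof.
move=> [d_metric [d_geodesic d_cat0]] d_complete f_convex f_proper f_lsc gam_gt0.
move=> n m x y alpha beta /andP[a0 a1] /andP[b0 b1] gam_eq.
have [beta1|beta_lt1] := eqVneq beta 1.
  move: gam_eq; rewrite beta1 subrr mul0r => /eqP.
  rewrite mulf_eq0 (gt_eqF (gam_gt0 n)) orbF subr_eq0 => /eqP alpha1.
  by rewrite -alpha1 !(geo_pt1 d_metric d_geodesic).
have [alpha1|alpha_lt1] := eqVneq alpha 1.
  move: gam_eq; rewrite alpha1 subrr mul0r => /esym/eqP.
  by rewrite mulf_eq0 (gt_eqF (gam_gt0 m)) orbF subr_eq0 eq_sym (negbTE beta_lt1).
have a01 : 0 <= alpha < 1 by rewrite a0 lt_neqAle alpha_lt1.
have b01 : 0 <= beta < 1 by rewrite b0 lt_neqAle beta_lt1.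
have J_step := resolvent_geo_pt d_metric d_geodesic d_cat0 d_complete
  f_convex f_proper f_lsc.
rewrite -{1}(J_step _ _ x (gam_gt0 n) a01) -{1}(J_step _ _ y (gam_gt0 m) b01).
rewrite -gam_eq; apply: (resolvent_nonexpansive d_metric d_geodesic d_cat0
  d_complete f_convex f_proper f_lsc).
by rewrite mulr_gt0 ?subr_gt0; case/andP: a01.
Qed.
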